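(* For any term $t$, any type $T$, any unit type $U$ and any context $\Gamma$ of the Scalar type system: if $\Gamma\vdash\lambda x\,t:U\to T$, then $\Gamma,x:U\vdash t:T$.
   Context: Fix a commutative ring $(\mathcal{S},+,\times)$. Terms: $t,r ::= b \mid (t)\,r \mid \mathbf{0} \mid \alpha.t \mid t+r$, basis terms $b ::= x \mid \lambda x\,t$, modulo associativity and commutativity of $+$. Types: $T ::= U \mid \forall X.T \mid \alpha.T \mid \overline{0}$; unit types: $U ::= X \mid U\to T \mid \forall X.U$. Type variables are only substituted by unit types; $(\alpha.T)[U/X]=\alpha.T[U/X]$. Type equivalence $\equiv$ is the least congruence with $\alpha.\overline0\equiv\overline0$, $0.T\equiv\overline0$, $1.T\equiv T$, $\alpha.(\beta.T)\equiv(\alpha\times\beta).T$, $\forall X.\alpha.T\equiv\alpha.\forall X.T$. A context is a set of distinct term variables with unit types. Typing rules: (ax) $\Gamma,x:U\vdash x:U$; ($\equiv$) from $\Gamma\vdash t:T$ and $T\equiv S$ infer $\Gamma\vdash t:S$; ($\to_E$) from $\Gamma\vdash t:\alpha.(U\to T)$ and $\Gamma\vdash r:\beta.U$ infer $\Gamma\vdash (t)\,r:(\alpha\times\beta).T$; ($\to_I$) from $\Gamma,x:U\vdash t:T$ infer $\Gamma\vdash\lambda x\,t:U\to T$; ($\forall_E$) from $\Gamma\vdash t:\forall X.T$ infer $\Gamma\vdash t:T[U/X]$, $U$ unit; ($\forall_I$) from $\Gamma\vdash t:T$ with $X$ not free in $\Gamma$ infer $\Gamma\vdash t:\forall X.T$;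 ($ax_{\overline0}$) $\Gamma\vdash\mathbf 0:\overline0$; ($+_I$) from $\Gamma\vdash t:\alpha.T$ and $\Gamma\vdash r:\beta.T$ infer $\Gamma\vdash t+r:(\alpha+\beta).T$; ($s_I$) from $\Gamma\vdash t:T$ infer $\Gamma\vdash\alpha.t:\alpha.T$. *)

From mathcomp Require Import all_boot all_algebra.
Set Implicit Arguments. Unset Strict Implicit. Unset Printing Implicit Defensive.
Import GRing.Theory.
Local Open Scope ring_scope.

Section Scalar.
Variable R : comPzRingType.

(* Terms: de Bruijn sterm variables; the lambda binds index 0. *)
Inductive sterm : Type :=
| tVar  : nat -> sterm
| tLam  : sterm -> sterm
| tApp  : sterm -> sterm -> sterm
| tZero : sterm
| tScal : R -> sterm -> sterm
| tPlus : sterm -> sterm -> sterm.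

(* Terms are taken modulo associativity and commutativity of +. *)
Inductive ac_eq : sterm -> sterm -> Prop :=
| ac_refl t : ac_eq t t
| ac_sym t r : ac_eq t r -> ac_eq r t
| ac_trans t r s : ac_eq t r -> ac_eq r s -> ac_eq t s
| ac_lam t t' : ac_eq t t' -> ac_eq (tLam t) (tLam t')
| ac_app t t' r r' : ac_eq t t' -> ac_eq r r' -> ac_eq (tApp t r) (tApp t' r')
| ac_scal a t t' : ac_eq t t' -> ac_eq (tScal a t) (tScal a t')
| ac_plus t t' r r' : ac_eq t t' -> ac_eq r r' -> ac_eq (tPlus t r) (tPlus t' r')
| ac_comm t r : ac_eq (tPlus t r) (tPlus r t)
| ac_assoc t r s : ac_eq (tPlus (tPlus t r) s) (tPlus t (tPlus r s)).

(* Raw types: de Bruijn stype variables; TForall binds index 0. *)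
Inductive stype : Type :=
| TVar    : nat -> stype
| TArrow  : stype -> stype -> stype
| TForall : stype -> stype
| TScal   : R -> stype -> stype
| TZero   : stype.

(* Grammar: T ::= U | forall X.T | a.T | 0 ;  U ::= X | U -> T | forall X.U *)
Fixpoint is_unit (T : stype) : bool :=
  match T with
  | TVar _ => true
  | TArrow U T' => is_unit U && wf T'
  | TForall U => is_unit U
  | _ => false
  end
with wf (T : stype) : bool :=
  match T with
  | TVar _ => true
  | TArrow U T' => is_unit U && wf T'
  | TForall T' => wf T'
  | TScal _ T' => wf T'
  | TZero => true
  end.

Fixpoint tshift (c : nat) (T : stype) : stype :=
  match T with
  | TVar n => if (c <= n)%N then TVar n.+1 else TVar n
  | TArrow U T' => TArrow (tshift c U) (tshift c T')
  | TForall T' => TForall (tshift c.+1 T')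
  | TScal a T' => TScal a (tshift c T')
  | TZero => TZero
  end.

Fixpoint tsubst (k : nat) (U : stype) (T : stype) : stype :=
  match T with
  | TVar n => if n == k then U else if (k < n)%N then TVar n.-1 else TVar n
  | TArrow V T' => TArrow (tsubst k U V) (tsubst k U T')
  | TForall T' => TForall (tsubst k.+1 (tshift 0 U) T')
  | TScal a T' => TScal a (tsubst k U T')
  | TZero => TZero
  end.

Inductive tequiv : stype -> stype -> Prop :=
| te_refl T : wf T -> tequiv T T
| te_sym T S : tequiv T S -> tequiv S T
| te_trans T S Q : tequiv T S -> tequiv S Q -> tequiv T Q
| te_scal0 a : tequiv (TScal a TZero) TZero
| te_zero T : wf T -> tequiv (TScal 0 T) TZero
| te_one T : wf T -> tequiv (TScal 1 T) T
| te_mul a b T : wf T -> tequiv (TScal a (TScal b T)) (TScal (a * b) T)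
| te_forall_scal a T : wf T ->
    tequiv (TForall (TScal a T)) (TScal a (TForall T))
| te_cong_arrow U U' T T' : is_unit U -> is_unit U' ->
    tequiv U U' -> tequiv T T' -> tequiv (TArrow U T) (TArrow U' T')
| te_cong_forall T T' : tequiv T T' -> tequiv (TForall T) (TForall T')
| te_cong_scal a T T' : tequiv T T' -> tequiv (TScal a T) (TScal a T').

(* Typing judgement Gamma |- t : T; a context is a list of (unit) types,
   the i-th entry being the stype of de Bruijn variable i. *)
Inductive typ : seq stype -> sterm -> stype -> Prop :=
| ty_ac G t t' T : typ G t T -> ac_eq t t' -> typ G t' T
| ty_ax G n U : onth G n = Some U -> typ G (tVar n) U
| ty_equiv G t T S : typ G t T -> tequiv T S -> typ G t S
| ty_arrE G t r a b U T :
    typ G t (TScal a (TArrow U T)) -> typ G r (TScal b U) ->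
    typ G (tApp t r) (TScal (a * b) T)
| ty_arrI G t U T : is_unit U -> typ (U :: G) t T -> typ G (tLam t) (TArrow U T)
| ty_forallE G t T U : is_unit U -> typ G t (TForall T) -> typ G t (tsubst 0 U T)
| ty_forallI G t T : typ (map (tshift 0) G) t T -> typ G t (TForall T)
| ty_ax0 G : typ G tZero TZero
| ty_plusI G t r a b T :
    typ G t (TScal a T) -> typ G r (TScal b T) -> typ G (tPlus t r) (TScal (a + b) T)
| ty_sI G t a T : typ G t T -> typ G (tScal a t) (TScal a T).

End Scalar.

(* Only the lambda rule types an abstraction directly, so the body's typing is
   read off any derivation of [Γ ⊢ λx t : T] by induction on the derivation,
   via the invariant [body_typ Γ t T]: stripping scalars and quantifiers from
   [T] leads to an arrow [U → T'] with [Γ, x:U ⊢ t : T'].  Type equivalence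
   can destroy this shape only through the axioms producing [0̄], which force
   the overall scalar [tcoef T] of the type to vanish; equivalence preserves
   [tcoef], and [tcoef (U → T) = 1].  This settles every non-trivial ring.  In
   the trivial ring all well-formed types are equivalent to [0̄], so any typing
   of the body can be converted into the required one. *)
From mathcomp Require Import all_boot all_algebra.
From mathcomp Require Import zify.
Set Implicit Arguments. Unset Strict Implicit. Unset Printing Implicit Defensive.
Import GRing.Theory.

Section ScalarInversion.
Variable R : comPzRingType.
Local Notation type := (stype R).
Local Notation term := (sterm R).
Local Open Scope ring_scope.

Lemma is_unit_wf (U : type) : is_unit U -> wf U.
Proof. by elim: U => //= U _ T _. Qed.

Lemma tshift_unit_wf (T : type) c :
  (is_unit T -> is_unit (tshift c T)) /\ (wf T -> wf (tshift c T)).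
Proof.
elim: T c => [n|U IU T IT|T IT|a T IT|] c //=.
- by case: ifP.
- have [? ?] := IU c; have [? ?] := IT c.
  by split=> /andP[? ?]; apply/andP; split; auto.
- by split=> //; case: (IT c).
Qed.

Lemma is_unit_tshift (U : type) c : is_unit U -> is_unit (tshift c U).
Proof. exact: (tshift_unit_wf U c).1. Qed.

Lemma wf_tshift (T : type) c : wf T -> wf (tshift c T).
Proof. exact: (tshift_unit_wf T c).2. Qed.

Lemma tsubst_unit_wf (T V : type) k : is_unit V ->
  (is_unit T -> is_unit (tsubst k V T)) /\ (wf T -> wf (tsubst k V T)).
Proof.
elim: T k V => [n|U IU T IT|T IT|a T IT|] k V uV //=.
- case: eqP => _; first by split=> _; last exact: is_unit_wf.
  by case: ifP.
- have [? ?] := IU k V uV; have [? ?] := IT k V uV.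
  by split=> /andP[? ?]; apply/andP; split; auto.
- exact/IT/is_unit_tshift.
- by split=> //; case: (IT k V uV).
Qed.

Lemma is_unit_tsubst (U V : type) k : is_unit V -> is_unit U -> is_unit (tsubst k V U).
Proof. by move=> uV; case: (tsubst_unit_wf U k uV). Qed.

Lemma wf_tsubst (T V : type) k : is_unit V -> wf T -> wf (tsubst k V T).
Proof. by move=> uV; case: (tsubst_unit_wf T k uV). Qed.

Ltac var_cases :=
  repeat (simpl; first [case: ifP => /= ? | case: eqP => /= ?]);
  try done; try lia; try (congr TVar; lia).

Lemma tshift_tshift (T : type) c d : (c <= d)%N ->
  tshift c (tshift d T) = tshift d.+1 (tshift c T).
Proof.
elim: T c d => [n|U IU T IT|T IT|a T IT|] c d cd /=; first by var_cases.
- by rewrite IU // IT.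
- by rewrite IT.
- by rewrite IT.
- by [].
Qed.

Lemma tsubst_tshift (T V : type) k : tsubst k V (tshift k T) = T.
Proof.
elim: T k V => [n|U IU T IT|T IT|a T IT|] k V /=; first by var_cases.
- by rewrite IU IT.
- by rewrite IT.
- by rewrite IT.
- by [].
Qed.

Lemma tsubst_tshift_comm (T V : type) c k : (c <= k)%N ->
  tsubst k.+1 (tshift c V) (tshift c T) = tshift c (tsubst k V T).
Proof.
elim: T c k V => [n|U IU T IT|T IT|a T IT|] c k V ck /=; first by var_cases.
- by rewrite IU // IT.
- by rewrite -IT // tshift_tshift.
- by rewrite IT.
- by [].
Qed.

Lemma tsubst_tsubst (T V W : type) j k : (j <= k)%N ->
  tsubst j (tsubst k V W) (tsubst k.+1 (tshift j V) T) =
  tsubst k V (tsubst j W T).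
Proof.
elim: T j k V W => [n|U IU T IT|T IT|a T IT|] j k V W jk /=.
- by var_cases; rewrite tsubst_tshift.
- by rewrite IU // IT.
- by rewrite -(tsubst_tshift_comm W V (c := 0)) // tshift_tshift // IT.
- by rewrite IT.
- by [].
Qed.

Lemma map_tsubst_tshift (G : seq type) k V :
  map (tsubst k V) (map (tshift k) G) = G.
Proof. by elim: G => //= X G ->; rewrite tsubst_tshift. Qed.

Lemma map_tsubst_tshift_comm (G : seq type) k V :
  map (tsubst k.+1 (tshift 0 V)) (map (tshift 0) G) =
  map (tshift 0) (map (tsubst k V) G).
Proof. by elim: G => //= X G ->; rewrite tsubst_tshift_comm. Qed.

Lemma all_unit_tshift (G : seq type) :
  all (@is_unit R) G -> all (@is_unit R) (map (tshift 0) G).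
Proof. by elim: G => //= A G IH /andP[uA uG]; rewrite is_unit_tshift ?IH. Qed.

Lemma tequiv_wf (A B : type) : tequiv A B -> wf A /\ wf B.
Proof.
elim=> //= [T S _ [? ?]|T S P _ [? ?] _ [? ?]|U U' T T' uU uU' _ [? ?] _ [? ?]] //.
by rewrite uU uU'.
Qed.

Lemma tequiv_tshift (A B : type) c :
  tequiv A B -> tequiv (tshift c A) (tshift c B).
Proof.
move=> AB; elim: AB c => /=
  [T wT|T S _ IH|T S P _ I1 _ I2|a|T wT|T wT|a b T wT|a T wT
  |U U' T T' uU uU' _ I1 _ I2|T T' _ IH|a T T' _ IH] c.
- exact/te_refl/wf_tshift.
- exact/te_sym/IH.
- exact: te_trans (I1 c) (I2 c).
- exact: te_scal0.
- exact/te_zero/wf_tshift.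
- exact/te_one/wf_tshift.
- exact/te_mul/wf_tshift.
- exact/te_forall_scal/wf_tshift.
- by apply: te_cong_arrow (I1 c) (I2 c); apply: is_unit_tshift.
- exact/te_cong_forall/IH.
- exact/te_cong_scal/IH.
Qed.

Lemma tequiv_tsubst (A B V : type) k : is_unit V ->
  tequiv A B -> tequiv (tsubst k V A) (tsubst k V B).
Proof.
move=> + AB; elim: AB k V => /=
  [T wT|T S _ IH|T S P _ I1 _ I2|a|T wT|T wT|a b T wT|a T wT
  |U U' T T' uU uU' _ I1 _ I2|T T' _ IH|a T T' _ IH] k V uV.
- exact/te_refl/wf_tsubst.
- exact/te_sym/IH.
- exact: te_trans (I1 k V uV) (I2 k V uV).
- exact: te_scal0.
- exact/te_zero/wf_tsubst.
- exact/te_one/wf_tsubst.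
- exact/te_mul/wf_tsubst.
- by apply/te_forall_scal/wf_tsubst; rewrite ?is_unit_tshift.
- by apply: te_cong_arrow (I1 k V uV) (I2 k V uV); apply: is_unit_tsubst.
- exact/te_cong_forall/IH/is_unit_tshift.
- exact/te_cong_scal/IH.
Qed.

Lemma tequiv_trivial (A B : type) : (1 : R) = 0 -> wf A -> wf B -> tequiv A B.
Proof.
move=> h10; have to0 X : wf X -> tequiv X (TZero R).
  by move=> wX; apply: te_trans (te_sym (te_one wX)) _; rewrite h10; exact: te_zero.
by move=> /to0 A0 /to0 B0; apply: te_trans A0 (te_sym B0).
Qed.

Lemma typ_tsubst (G : seq type) s T : typ G s T -> forall k V, is_unit V ->
  typ (map (tsubst k V) G) s (tsubst k V T).
Proof.
elim=> {G s T} /=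
  [G t t' T _ IH st|G n U Gn|G t T S _ IH TS|G t r a b U T _ I1 _ I2
  |G t U T uU _ IH|G t T U uU _ IH|G t T _ IH|G|G t r a b T _ I1 _ I2
  |G t a T _ IH] k V uV.
- exact: ty_ac (IH k V uV) st.
- by apply: ty_ax; rewrite onth_map Gn.
- exact: ty_equiv (IH k V uV) (tequiv_tsubst k uV TS).
- exact: ty_arrE (I1 k V uV) (I2 k V uV).
- exact/ty_arrI/IH/uV/is_unit_tsubst.
- rewrite -tsubst_tsubst //.
  exact/ty_forallE/IH/uV/is_unit_tsubst.
- by apply/ty_forallI; rewrite -map_tsubst_tshift_comm; apply/IH/is_unit_tshift.
- exact: ty_ax0.
- exact: ty_plusI (I1 k V uV) (I2 k V uV).
- exact/ty_sI/IH.
Qed.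

Lemma ac_eq_lam (s s' : term) : ac_eq s s' ->
  (forall x, s = tLam x -> exists2 y, s' = tLam y & ac_eq x y) /\
  (forall y, s' = tLam y -> exists2 x, s = tLam x & ac_eq x y).
Proof.
elim=> {s s'} [t|t r _ [I1 I2]|t r q _ [I1 I2] _ [J1 J2]|t t' tt' _|*|*|*|*|*];
  try by split.
- by split=> x ->; exists x => //; exact: ac_refl.
- split=> [x /I2 [y -> xy] | y /I1 [x -> yx]].
  + by exists y => //; exact: ac_sym.
  + by exists x => //; exact: ac_sym.
- split=> [x /I1 [y /J1 [z -> yz] xy] | z /J2 [y /I2 [x -> xy] yz]].
  + by exists z => //; exact: ac_trans xy yz.
  + by exists x => //; exact: ac_trans xy yz.
- by split=> x [<-]; [exists t' | exists t].
Qed.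

Lemma ac_eq_lamr (s t : term) : ac_eq s (tLam t) ->
  exists2 x, s = tLam x & ac_eq x t.
Proof. by move/ac_eq_lam=> [_]; apply. Qed.

(* The equality case is needed because [tequiv] is reflexive on well-formed
   types only. *)
Fixpoint ctx_equiv (G G' : seq type) : Prop :=
  match G, G' with
  | [::], [::] => True
  | A :: G, B :: G' => (A = B \/ tequiv A B) /\ ctx_equiv G G'
  | _, _ => False
  end.

Lemma ctx_equiv_refl (G : seq type) : ctx_equiv G G.
Proof. by elim: G => //= A G IH; split; first left. Qed.

Lemma ctx_equiv_cons (A B : type) G : tequiv A B -> ctx_equiv (A :: G) (B :: G).
Proof. by split; [right | exact: ctx_equiv_refl]. Qed.

Lemma ctx_equiv_tshift (G G' : seq type) :
  ctx_equiv G G' -> ctx_equiv (map (tshift 0) G) (map (tshift 0) G').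
Proof.
elim: G G' => [|A G IH] [|B G'] //= [[-> | AB] GG']; split; auto.
by right; apply: tequiv_tshift.
Qed.

Lemma ctx_equiv_onth (G G' : seq type) n A : ctx_equiv G G' ->
  onth G n = Some A -> exists2 B, onth G' n = Some B & A = B \/ tequiv A B.
Proof.
elim: G G' n => [|A' G IH] [|B G'] [|n] //= [AB GG']; last exact: IH.
by case=> <-; exists B.
Qed.

Lemma typ_ctx_equiv (G G' : seq type) s T : ctx_equiv G G' ->
  typ G s T -> typ G' s T.
Proof.
move=> + sT; elim: sT G' => {G s T}
  [G t t' T _ IH st|G n A Gn|G t T S _ IH TS|G t r a b U T _ I1 _ I2
  |G t U T uU _ IH|G t T U uU _ IH|G t T _ IH|G|G t r a b T _ I1 _ I2
  |G t a T _ IH] G' GG'.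
- exact: ty_ac (IH G' GG') st.
- have [B G'n [-> | AB]] := ctx_equiv_onth GG' Gn; first exact: ty_ax.
  exact: ty_equiv (ty_ax G'n) (te_sym AB).
- exact: ty_equiv (IH G' GG') TS.
- exact: ty_arrE (I1 G' GG') (I2 G' GG').
- by apply: (ty_arrI uU); apply: IH; split; first left.
- exact/ty_forallE/IH.
- exact/ty_forallI/IH/ctx_equiv_tshift.
- exact: ty_ax0.
- exact: ty_plusI (I1 G' GG') (I2 G' GG').
- exact/ty_sI/IH.
Qed.

Lemma all_unit_onth (G : seq type) n U :
  all (@is_unit R) G -> onth G n = Some U -> is_unit U.
Proof.
elim: G n => [|A G IH] [|n] //= /andP[uA uG]; first by case=> <-.
exact: IH.
Qed.

Lemma typ_wf (G : seq type) s T : all (@is_unit R) G -> typ G s T -> wf T.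
Proof.
move=> + sT; elim: sT => {G s T} //=.
- by move=> G n U Gn uG; apply/is_unit_wf/(all_unit_onth uG Gn).
- by move=> G t T S _ _ /tequiv_wf[].
- by move=> G t r a b U T _ IH _ _ /IH/andP[].
- by move=> G t U T uU _ IH uG; rewrite uU IH //= uU.
- by move=> G t T U uU _ IH /IH; apply: wf_tsubst.
- by move=> G t T _ IH /all_unit_tshift/IH.
Qed.

Fixpoint tcoef (T : type) : R :=
  match T with
  | TForall T => tcoef T
  | TScal a T => a * tcoef T
  | TZero => 0
  | _ => 1
  end.

Lemma tcoef_tequiv (A B : type) : tequiv A B -> tcoef A = tcoef B.
Proof.
elim=> {A B} //=.
- by move=> T S P _ -> _ ->.
- by move=> a; rewrite mulr0.
- by move=> T _; rewrite mul0r.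
- by move=> T _; rewrite mul1r.
- by move=> a b T _; rewrite mulrA.
- by move=> a T T' _ ->.
Qed.

Lemma tcoef_unit (U : type) : is_unit U -> tcoef U = 1.
Proof. by elim: U. Qed.

Lemma tcoef_tsubst (T V : type) k : is_unit V -> tcoef (tsubst k V T) = tcoef T.
Proof.
elim: T k V => [n|U IU T IT|T IT|a T IT|] k V uV //=.
- by case: eqP => _; [exact: tcoef_unit | case: ifP].
- exact/IT/is_unit_tshift.
- by rewrite IT.
Qed.

Fixpoint body_typ (G : seq type) (t : term) (T : type) : Prop :=
  match T with
  | TArrow U T => typ (U :: G) t T
  | TForall T => body_typ (map (tshift 0) G) t T
  | TScal _ T => body_typ G t T
  | _ => False
  end.

Lemma body_typ_tequiv (A B : type) : tequiv A B ->
  forall G t, tcoef A != 0 -> body_typ G t A <-> body_typ G t B.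
Proof.
elim=> {A B} //=.
- move=> T S TS IH G t; rewrite -(tcoef_tequiv TS) => nzS.
  exact: iff_sym (IH G t nzS).
- move=> T S P TS I1 _ I2 G t nzT; rewrite (I1 G t nzT).
  by apply: I2; rewrite -(tcoef_tequiv TS).
- by move=> T _ G t; rewrite mul0r eqxx.
- move=> U U' T T' _ _ UU' _ TT' _ G t _; split=> tT.
  + exact: ty_equiv (typ_ctx_equiv (ctx_equiv_cons _ UU') tT) TT'.
  + apply: ty_equiv (typ_ctx_equiv (ctx_equiv_cons _ (te_sym UU')) tT) _.
    exact: te_sym.
- by move=> T T' _ IH G t /IH.
- move=> a T T' _ IH G t nzaT; apply: IH.
  by apply: contra nzaT => /eqP->; rewrite mulr0.
Qed.

Lemma body_typ_tsubst (T V : type) G t k : is_unit V -> body_typ G t T ->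
  body_typ (map (tsubst k V) G) t (tsubst k V T).
Proof.
elim: T G k V => [n|U IU T IT|T IT|a T IT|] G k V uV //=.
- by move/typ_tsubst; apply.
- by rewrite -map_tsubst_tshift_comm; apply/IT/is_unit_tshift.
- exact: IT.
Qed.

Lemma typ_lam_body (G : seq type) s S t : typ G s S -> ac_eq s (tLam t) ->
  tcoef S != 0 -> body_typ G t S.
Proof.
move=> sS; elim: sS t => {G s S}
  [G s s' T _ IH ss'|G n U _|G s T S _ IH TS|G s r a b U T _ _ _ _
  |G s U T uU sT _|G s T U uU _ IH|G s T _ IH|G|G s r a b T _ _ _ _
  |G s a T _ _] t st; try by case/ac_eq_lamr: st.
- exact: IH (ac_trans ss' st).
- rewrite -(tcoef_tequiv TS) => nzT.
  by rewrite -(body_typ_tequiv TS) //; apply: IH.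
- by case/ac_eq_lamr: st => x [<-] xt _; apply: ty_ac sT xt.
- (* [G] is the instance [(shift G)[U/0]] of the context of the premise. *)
  rewrite tcoef_tsubst // => nzT.
  by rewrite -(map_tsubst_tshift G 0 U); apply/body_typ_tsubst/IH.
- exact: IH.
Qed.

Lemma typ_lam_some_body (G : seq type) s S t : typ G s S -> ac_eq s (tLam t) ->
  exists2 U, is_unit U & exists T, typ (U :: G) t T.
Proof.
move=> sS; elim: sS t => {G s S}
  [G s s' T _ IH ss'|G n U _|G s T S _ IH TS|G s r a b U T _ _ _ _
  |G s U T uU sT _|G s T U uU _ IH|G s T _ IH|G|G s r a b T _ _ _ _
  |G s a T _ _] t st; try by case/ac_eq_lamr: st.
- exact: IH (ac_trans ss' st).
- exact: IH.
- case/ac_eq_lamr: st => x [<-] xt.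
  by exists U => //; exists T; apply: ty_ac sT xt.
- exact: IH.
- (* Substituting the variable [0] for itself undoes the context shift. *)
  have [U uU [T' tT']] := IH t st.
  have := typ_tsubst tT' 0 (isT : is_unit (TVar R 0)).
  rewrite /= map_tsubst_tshift => tT0.
  exists (tsubst 0 (TVar R 0) U); first exact: is_unit_tsubst.
  by exists (tsubst 0 (TVar R 0) T').
Qed.

End ScalarInversion.

Theorem mainTheorem8 (R : comPzRingType) (G : seq (stype R)) (t : sterm R)
    (T U : stype R) :
  all (@is_unit R) G -> is_unit U -> wf T ->
  typ G (tLam t) (TArrow U T) -> typ (U :: G) t T.
Proof.
move=> uG uU wT lamT.
have [/eqP h10 | nz1] := boolP (1 == 0 :> R)%R.
- have [U' uU' [T' tT']] := typ_lam_some_body lamT (ac_refl _).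
  have wT' : wf T' by apply: typ_wf tT'; rewrite /= uU'.
  have UU' : tequiv U' U by apply: tequiv_trivial; rewrite // is_unit_wf.
  apply: ty_equiv (typ_ctx_equiv (ctx_equiv_cons G UU') tT') _.
  exact: tequiv_trivial.
- exact: typ_lam_body lamT (ac_refl _) nz1.
Qed.
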